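(* Let $\Gamma$ be a group, $\mathcal{S}=\mathcal{S}(\Pi,A,\xi)$ a Gr-category of the type $(\Pi,A)$, and $(\theta,F)$ an enough strict factor set on $\Gamma$ with coefficients in $\mathcal{S}$, with $A$ regarded as a $\Pi$-module $\Gamma$-equivariant via $\sigma x=F^\sigma(x)$ and $F^\sigma(x,a)=(\sigma x,\sigma a)$. Write $\widetilde{F^\sigma}_{x,y}=(\sigma(xy),\tilde f(x,y,\sigma))$ and $\theta^{\sigma,\tau}_x=(\sigma\tau x,t(x,\sigma,\tau))$, and let $h:\Pi^3\cup(\Pi^2\times\Gamma)\cup(\Pi\times\Gamma^2)\to A$ be given by $h|_{\Pi^3}=\xi$, $h|_{\Pi^2\times\Gamma}=\tilde f$, $h|_{\Pi\times\Gamma^2}=t$. Then $h\in Z^3_\Gamma(\Pi,A)$.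
   Context: A Gr-category of the type $(\Pi,A)$ ($\Pi$ a group, $A$ a left $\Pi$-module), $\mathcal{S}(\Pi,A,\xi)$: objects are elements of $\Pi$, morphisms only automorphisms $\mathrm{Aut}(x)=\{x\}\times A$, composition $(x,u)\circ(x,v)=(x,u+v)$, tensor $x\otimes y=xy$, $(x,u)\otimes(y,v)=(xy,u+xv)$, associativity constraint $a_{x,y,z}=(xyz,\xi(x,y,z))$ with $\xi\in Z^3(\Pi,A)$ a normalized 3-cocycle, strict unit constraints (unit $I=1$). Monoidal functors are $F=(F,\widetilde F,\widehat F)$ with $\widetilde F_{x,y}:F(x\otimes y)\to F(x)\otimes F(y)$, $\widehat F:F(I)\to I$. A factor set on $\Gamma$ with coefficients in $\mathcal{S}$: monoidal autoequivalences $F^\sigma$ of $\mathcal{S}$ and isomorphisms of monoidal functors $\theta^{\sigma,\tau}:F^\sigma F^\tau\to F^{\sigma\tau}$ with $F^1=\mathrm{id}$, $\theta^{1,\sigma}=\theta^{\sigma,1}=\mathrm{id}$, $\theta^{\sigma\tau,\gamma}\circ(\theta^{\sigma,\tau}F^\gamma)=\theta^{\sigma,\tau\gamma}\circ(F^\sigma\theta^{\tau,\gamma})$; it is enough strict if $\widehat{F^\sigma}=\mathrm{id}_I$ for all $\sigma$. For such a factor set, each $F^\sigma$ acts by a group automorphism $x\mapsto\sigma x$ of $\Pi$ on objects and by $(x,a)\mapsto(\sigma x,\sigma a)$ on morphisms with $a\mapsto \sigma a$ an automorphism of $A$, these give actions of $\Gamma$ with $\sigma(xa)=(\sigma x)(\sigma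 a)$ (a $\Pi$-module $\Gamma$-equivariant, or $\Gamma$-pair $(\Pi,A)$). For a $\Gamma$-pair $(\Pi,A)$, $Z^3_\Gamma(\Pi,A)$ is the set of normalized maps $h:\Pi^3\cup(\Pi^2\times\Gamma)\cup(\Pi\times\Gamma^2)\to A$ (normalized: $h$ vanishes whenever one of its arguments is the identity element of $\Pi$ or of $\Gamma$) satisfying, for all $x,y,z,t\in\Pi$, $\sigma,\tau,\gamma\in\Gamma$: $h(x,y,zt)+h(xy,z,t)=x\,h(y,z,t)+h(x,yz,t)+h(x,y,z)$; $\sigma h(x,y,z)+h(xy,z,\sigma)+h(x,y,\sigma)=h(\sigma x,\sigma y,\sigma z)+(\sigma x)h(y,z,\sigma)+h(x,yz,\sigma)$; $\sigma h(x,y,\tau)+h(\tau x,\tau y,\sigma)+h(x,\sigma,\tau)+(\sigma\tau x)h(y,\sigma,\tau)=h(x,y,\sigma\tau)+h(xy,\sigma,\tau)$; $\sigma h(x,\tau,\gamma)+h(x,\sigma,\tau\gamma)=h(x,\sigma\tau,\gamma)+h(\gamma x,\sigma,\tau)$. *)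

From HB Require Import structures.
From mathcomp Require Import all_boot all_order all_algebra.
Set Implicit Arguments. Unset Strict Implicit. Unset Printing Implicit Defensive.
Import GRing.Theory.
Local Open Scope ring_scope.

Definition is_left_module (Pi : groupType) (A : zmodType) (act : Pi -> A -> A)
  : Prop :=
  [/\ forall a, act 1%g a = a,
      forall x y a, act (x * y)%g a = act x (act y a)
    & forall x a b, act x (a + b) = act x a + act x b].

Definition normalized_3cocycle (Pi : groupType) (A : zmodType)
  (act : Pi -> A -> A) (xi : Pi -> Pi -> Pi -> A) : Prop :=
  (forall x y z t : Pi,
      xi x y (z * t)%g + xi (x * y)%g z t
      = act x (xi y z t) + xi x (y * z)%g t + xi x y z)
  /\ (forall x y : Pi, [/\ xi 1%g x y = 0, xi x 1%g y = 0 & xi x y 1%g = 0]).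

(* The Gr-category S(Pi, A, xi): objects are the elements of Pi, the only
   morphisms are automorphisms Aut(x) = {x} x A, composition is addition in A,
   (x,u) (x) (y,v) = (xy, u + x v), a_{x,y,z} = (xyz, xi x y z) :
   x (x) (y (x) z) -> (x (x) y) (x) z, strict unit I = 1.

   Since every morphism is an automorphism, a functor F : S -> S is given by
   an object map [mf_obj : Pi -> Pi] and, for each object x, the map
   [mf_mor x : A -> A] with F(x,u) = (F x, mf_mor x u).  A monoidal structure
   (F~, F^) with F~_{x,y} : F(x (x) y) -> F x (x) F y and F^ : F I -> I
   can only exist when F(xy) = F x F y and F 1 = 1, and is then given by
   elements F~_{x,y} = (F(xy), mf_til x y) and F^ = (1, mf_hat) of A. *)
Record monfun (Pi : groupType) (A : zmodType) := MonFun {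
  mf_obj : Pi -> Pi;
  mf_mor : Pi -> A -> A;
  mf_til : Pi -> Pi -> A;
  mf_hat : A }.

Definition is_monoidal_functor (Pi : groupType) (A : zmodType)
  (act : Pi -> A -> A) (xi : Pi -> Pi -> Pi -> A) (F : monfun Pi A) : Prop :=
  let Fo := mf_obj F in let Fm := mf_mor F in
  let Ft := mf_til F in let Fh := mf_hat F in
  (* F~_{x,y} and F^ are morphisms of S (source = target) *)
  (forall x y, Fo (x * y)%g = (Fo x * Fo y)%g) /\
  Fo 1%g = 1%g /\
  (* functoriality: identities and composition *)
  (forall x, Fm x 0 = 0) /\
  (forall x u v, Fm x (u + v) = Fm x u + Fm x v) /\
  (* naturality of F~ : F~ o F((x,u) (x) (y,v)) = (F(x,u) (x) F(y,v)) o F~ *)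
  (forall x y u v,
      Ft x y + Fm (x * y)%g (u + act x v) = Fm x u + act (Fo x) (Fm y v) + Ft x y) /\
  (* compatibility with the associativity constraints:
     (F~ (x) id) o F~_{xy,z} o F(a_{x,y,z}) = a_{Fx,Fy,Fz} o (id (x) F~) o F~_{x,yz} *)
  (forall x y z,
      Ft x y + Ft (x * y)%g z + Fm (x * y * z)%g (xi x y z)
      = xi (Fo x) (Fo y) (Fo z) + act (Fo x) (Ft y z) + Ft x (y * z)%g) /\
  (* compatibility with the (strict) left unit constraint:
     l_{Fx} o (F^ (x) id) o F~_{I,x} = F(l_x) *)
  (forall x, Fh + Ft 1%g x = 0) /\
  (* compatibility with the (strict) right unit constraint:
     r_{Fx} o (id (x) F^) o F~_{x,I} = F(r_x) *)
  (forall x, act (Fo x) Fh + Ft x 1%g = 0).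

(* F is an equivalence of categories S -> S.  Since S has no morphisms between
   distinct objects, this means: F is bijective on objects and on each
   hom-set Aut(x) -> Aut(F x). *)
Definition is_equivalence (Pi : groupType) (A : zmodType) (F : monfun Pi A)
  : Prop :=
  bijective (mf_obj F) /\ (forall x, bijective (mf_mor F x)).

Definition is_monoidal_autoequivalence (Pi : groupType) (A : zmodType)
  (act : Pi -> A -> A) (xi : Pi -> Pi -> Pi -> A) (F : monfun Pi A) : Prop :=
  is_monoidal_functor act xi F /\ is_equivalence F.

Definition mf_id (Pi : groupType) (A : zmodType) : monfun Pi A :=
  MonFun (fun x => x) (fun _ u => u) (fun _ _ => 0) 0.

(* The composite monoidal functor F G (first G, then F):
   (FG)~_{x,y} = F~_{Gx,Gy} o F(G~_{x,y}),  (FG)^ = F^ o F(G^). *)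
Definition mf_comp (Pi : groupType) (A : zmodType) (F G : monfun Pi A)
  : monfun Pi A :=
  MonFun (fun x => mf_obj F (mf_obj G x))
         (fun x u => mf_mor F (mf_obj G x) (mf_mor G x u))
         (fun x y => mf_til F (mf_obj G x) (mf_obj G y)
                     + mf_mor F (mf_obj G (x * y)%g) (mf_til G x y))
         (mf_hat F + mf_mor F 1%g (mf_hat G)).

(* th : F -> G is a morphism (hence an isomorphism, all morphisms of S being
   invertible) of monoidal functors, with components th_x = (F x, th x). *)
Definition is_monoidal_nat_iso (Pi : groupType) (A : zmodType)
  (act : Pi -> A -> A) (F G : monfun Pi A) (th : Pi -> A) : Prop :=
  [/\ (* th_x : F x -> G x is a morphism of S *)
      (forall x, mf_obj F x = mf_obj G x),
      (* naturality: th_x o F(x,u) = G(x,u) o th_x *)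
      (forall x u, th x + mf_mor F x u = mf_mor G x u + th x),
      (* monoidality: G~_{x,y} o th_{xy} = (th_x (x) th_y) o F~_{x,y} *)
      (forall x y, mf_til G x y + th (x * y)%g
                   = th x + act (mf_obj F x) (th y) + mf_til F x y)
    & (* compatibility with units: G^ o th_I = F^ *)
      mf_hat G + th 1%g = mf_hat F].

(* Whiskerings: (th F)_x = th_{F x} and (F th)_x = F(th_x). *)
Definition whisker_r (Pi : groupType) (A : zmodType)
  (th : Pi -> A) (F : monfun Pi A) : Pi -> A := fun x => th (mf_obj F x).
Definition whisker_l (Pi : groupType) (A : zmodType) (F : monfun Pi A)
  (G : monfun Pi A) (th : Pi -> A) : Pi -> A :=
  fun x => mf_mor F (mf_obj G x) (th x).

Definition is_factor_set (Gamma Pi : groupType) (A : zmodType)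
  (act : Pi -> A -> A) (xi : Pi -> Pi -> Pi -> A)
  (F : Gamma -> monfun Pi A) (theta : Gamma -> Gamma -> Pi -> A) : Prop :=
  [/\ (forall s, is_monoidal_autoequivalence act xi (F s)),
      (forall s r, is_monoidal_nat_iso act (mf_comp (F s) (F r)) (F (s * r)%g)
                                       (theta s r)),
      F 1%g = mf_id Pi A,
      (forall s x, theta 1%g s x = 0 /\ theta s 1%g x = 0)
    & (* theta^{st,g} o (theta^{s,t} F^g) = theta^{s,tg} o (F^s theta^{t,g}) *)
      (forall s r g x,
          theta (s * r)%g g x + whisker_r (theta s r) (F g) x
          = theta s (r * g)%g x + whisker_l (F s) (mf_comp (F r) (F g)) (theta r g) x)].

Definition enough_strict (Gamma Pi : groupType) (A : zmodType)
  (F : Gamma -> monfun Pi A) : Prop :=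
  forall s, mf_hat (F s) = 0.

(* The induced actions of Gamma: s x := F^s(x) and F^s(x, a) = (s x, s a);
   the morphism part of F^s does not depend on the object (a consequence of
   naturality of F~), we read it off at the object 1. *)
Definition gact_obj (Gamma Pi : groupType) (A : zmodType)
  (F : Gamma -> monfun Pi A) (s : Gamma) (x : Pi) : Pi := mf_obj (F s) x.
Definition gact_mod (Gamma Pi : groupType) (A : zmodType)
  (F : Gamma -> monfun Pi A) (s : Gamma) (a : A) : A := mf_mor (F s) 1%g a.

(* Z^3_Gamma(Pi, A) for a Gamma-pair (Pi, A): the normalized maps
   h : Pi^3 u (Pi^2 x Gamma) u (Pi x Gamma^2) -> A, represented by their three
   restrictions h3, h2, h1, satisfying the four cocycle equations. *)
Definition Z3Gamma (Gamma Pi : groupType) (A : zmodType)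
  (act : Pi -> A -> A) (gobj : Gamma -> Pi -> Pi) (gmod : Gamma -> A -> A)
  (h3 : Pi -> Pi -> Pi -> A) (h2 : Pi -> Pi -> Gamma -> A)
  (h1 : Pi -> Gamma -> Gamma -> A) : Prop :=
  [/\
      (forall x y : Pi, [/\ h3 1%g x y = 0, h3 x 1%g y = 0 & h3 x y 1%g = 0]),
      (forall (x y : Pi) (s : Gamma),
          [/\ h2 1%g y s = 0, h2 x 1%g s = 0 & h2 x y 1%g = 0])
    & (forall (x : Pi) (s r : Gamma),
          [/\ h1 1%g s r = 0, h1 x 1%g r = 0 & h1 x s 1%g = 0])]
  /\ [/\
      (forall x y z t : Pi,
          h3 x y (z * t)%g + h3 (x * y)%g z t
          = act x (h3 y z t) + h3 x (y * z)%g t + h3 x y z),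
      (forall (x y z : Pi) (s : Gamma),
          gmod s (h3 x y z) + h2 (x * y)%g z s + h2 x y s
          = h3 (gobj s x) (gobj s y) (gobj s z) + act (gobj s x) (h2 y z s)
            + h2 x (y * z)%g s),
      (forall (x y : Pi) (s r : Gamma),
          gmod s (h2 x y r) + h2 (gobj r x) (gobj r y) s + h1 x s r
          + act (gobj (s * r)%g x) (h1 y s r)
          = h2 x y (s * r)%g + h1 (x * y)%g s r)
    & (forall (x : Pi) (s r g : Gamma),
          gmod s (h1 x r g) + h1 x s (r * g)%g
          = h1 x (s * r)%g g + h1 (gobj g x) s r)].

(** The four equations of [Z3Gamma] are the coherence conditions of the
    factor set, read in the Gr-category [S(Pi, A, xi)]: the 3-cocycle
    condition on [xi] is given, the compatibility of each [F^s] with the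
    associativity constraints is the equation in [(x, y, z, s)], the
    monoidality of [theta^{s,r}] is the one in [(x, y, s, r)], and the
    coherence of [theta] is the one in [(x, s, r, g)].  The only extra input
    is that the morphism part of a monoidal functor of [S] does not depend
    on the object (naturality of [F~] at [(1, x)]), so every [F^s] may be
    replaced by the induced action of [s] on [A].  Normalization comes from
    the unit axioms, strictness [F^ = 0] and [F^1 = id]. *)
From HB Require Import structures.
From mathcomp Require Import all_boot all_order all_algebra.
Set Implicit Arguments. Unset Strict Implicit. Unset Printing Implicit Defensive.
Import GRing.Theory.
Local Open Scope ring_scope.

Lemma additive_map0 (U V : zmodType) (f : U -> V) :
  {morph f : a b / a + b} -> f 0 = 0.
Proof. by move=> fD; apply: (addrI (f 0)); rewrite -fD !addr0. Qed.

Section MonoidalFunctor.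

Variables (Pi : groupType) (A : zmodType).
Variables (act : Pi -> A -> A) (xi : Pi -> Pi -> Pi -> A).
Hypothesis actD : forall x, {morph act x : a b / a + b}.

Let act0 x : act x 0 = 0. Proof. exact: additive_map0. Qed.

Variable F : monfun Pi A.
Hypothesis F_monoidal : is_monoidal_functor act xi F.

Lemma mf_mor_objE x u : mf_mor F x u = mf_mor F 1%g u.
Proof.
have [_ [_ [Fm0 [_ [Ftnat _]]]]] := F_monoidal.
have := Ftnat 1%g x u 0; rewrite act0 addr0 Fm0 act0 addr0 mul1g => e.
by apply: (addrI (mf_til F 1%g x)); rewrite e addrC.
Qed.

Lemma mf_til1x x : mf_hat F = 0 -> mf_til F 1%g x = 0.
Proof.
have [_ [_ [_ [_ [_ [_ [Ftl _]]]]]]] := F_monoidal.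
by move=> Fh0; have := Ftl x; rewrite Fh0 add0r.
Qed.

Lemma mf_tilx1 x : mf_hat F = 0 -> mf_til F x 1%g = 0.
Proof.
have [_ [_ [_ [_ [_ [_ [_ Ftr]]]]]]] := F_monoidal.
by move=> Fh0; have := Ftr x; rewrite Fh0 act0 add0r.
Qed.

Lemma mf_til_assoc x y z :
  mf_mor F 1%g (xi x y z) + mf_til F (x * y)%g z + mf_til F x y
  = xi (mf_obj F x) (mf_obj F y) (mf_obj F z)
    + act (mf_obj F x) (mf_til F y z) + mf_til F x (y * z)%g.
Proof.
have [_ [_ [_ [_ [_ [Ftassoc _]]]]]] := F_monoidal.
rewrite -(mf_mor_objE (x * y * z)) -Ftassoc.
by rewrite [RHS]addrC (addrC (mf_til F x y)) addrA.
Qed.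

Variables (G H : monfun Pi A) (th : Pi -> A).
Hypothesis th_iso : is_monoidal_nat_iso act (mf_comp F G) H th.

Lemma nat_iso_comp_til x y :
  mf_mor F 1%g (mf_til G x y) + mf_til F (mf_obj G x) (mf_obj G y)
    + th x + act (mf_obj H x) (th y)
  = mf_til H x y + th (x * y)%g.
Proof.
have [Hobj _ Hmon _] := th_iso.
rewrite -Hobj Hmon /= -(mf_mor_objE (mf_obj G (x * y))).
by rewrite -[LHS]addrA [LHS]addrC (addrC (mf_til F _ _)).
Qed.

Lemma nat_iso_comp_strict1 :
  mf_hat F = 0 -> mf_hat G = 0 -> mf_hat H = 0 -> th 1%g = 0.
Proof.
have [_ [_ [Fm0 _]]] := F_monoidal; have [_ _ _ Hhat] := th_iso.
by move=> Fh0 Gh0 Hh0; move: Hhat; rewrite /= Fh0 Gh0 Hh0 Fm0 !add0r.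
Qed.

End MonoidalFunctor.

Theorem proposition3p4 (Gamma Pi : groupType) (A : zmodType)
  (act : Pi -> A -> A) (xi : Pi -> Pi -> Pi -> A)
  (F : Gamma -> monfun Pi A) (theta : Gamma -> Gamma -> Pi -> A) :
  is_left_module act ->
  normalized_3cocycle act xi ->
  is_factor_set act xi F theta ->
  enough_strict F ->
  Z3Gamma act (gact_obj F) (gact_mod F)
    xi
    (fun x y s => mf_til (F s) x y)
    (fun x s r => theta s r x).
Proof.
move=> [_ _ actD] [xi_cocycle xi_norm] [F_auto th_iso F1 th_norm th_coh] F_strict.
have F_mon s : is_monoidal_functor act xi (F s) by have [] := F_auto s.
split; split.
- exact: xi_norm.
- move=> x y s; split; last by rewrite F1.
  + exact (mf_til1x (F_mon s) y (F_strict s)).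
  + exact (mf_tilx1 actD (F_mon s) x (F_strict s)).
- move=> x s r; split.
  + exact (nat_iso_comp_strict1 (F_mon s) (th_iso s r)
             (F_strict s) (F_strict r) (F_strict _)).
  + by have [] := th_norm r x.
  + by have [] := th_norm s x.
- exact: xi_cocycle.
- move=> x y z s; exact (mf_til_assoc actD (F_mon s) x y z).
- move=> x y s r; exact (nat_iso_comp_til actD (F_mon s) (th_iso s r) x y).
- move=> x s r g; have := th_coh s r g x.
  rewrite /whisker_r /whisker_l /= (mf_mor_objE actD (F_mon s)) => e.
  by rewrite /gact_mod /gact_obj addrC -e addrC.
Qed.
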